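(* Let $\sigma\in(0,0.25]$, $\pi_0\in(0,1)$, $w>0$ and $\pi^*\in(0,1)$, and let $\psi(\pi)=w$ if $\pi\ge\pi^*$ and $\psi(\pi)=0$ otherwise. Define $\pi_1(1)=\frac{(1+4\sigma)\pi_0}{1+4\sigma\pi_0}$, $\pi_1(0)=\frac{(1-4\sigma)\pi_0}{1-4\sigma\pi_0}$, $\Phi(C,\sigma,\pi_0)=0.5+2\sigma\pi_0+(0.5+2\sigma\pi_0)\psi(\pi_1(1))+(0.5-2\sigma\pi_0)\psi(\pi_1(0))$ and $\Phi(S,\sigma,\pi_0)=0.5+\psi(\pi_0)$; the expert chooses the complex rule iff $\Phi(C,\sigma,\pi_0)\ge\Phi(S,\sigma,\pi_0)$ and the simple rule otherwise. Let $$\pi^\dagger=\frac{w}{4\sigma(1+w)},\qquad \overline\pi=\frac{\pi^*}{1-4\sigma(1-\pi^* )}.$$ If $\pi^\dagger\le\pi^*$ then the expert chooses the complex rule. If $\pi^\dagger>\pi^*$ then he chooses the simple rule if and only if $\pi^*\le\pi_0<\min\{\pi^\dagger,\overline\pi\}$.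
   Context: Interpretation: the expert earns wage $w$ iff the posterior belief that he is competent is at least $\pi^*$; the complex rule yields the correct action with probability $0.5+2\sigma$ if he is competent and $0.5$ otherwise (posterior $\pi_1(Y)$ after correct $Y=1$ or incorrect $Y=0$ action), and the simple rule yields it with probability $0.5$ and leaves the posterior at the prior $\pi_0$. *)

From Stdlib Require Import Reals.
Open Scope R_scope.

Definition psi (pistar w p : R) : R := if Rle_dec pistar p then w else 0.

(* Posteriors after a correct (Y=1) / incorrect (Y=0) action under the complex rule. *)
Definition pi1_1 (sigma pi0 : R) : R := (1 + 4 * sigma) * pi0 / (1 + 4 * sigma * pi0).
Definition pi1_0 (sigma pi0 : R) : R := (1 - 4 * sigma) * pi0 / (1 - 4 * sigma * pi0).

Definition PhiC (pistar w sigma pi0 : R) : R :=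
  (1/2) + 2 * sigma * pi0
  + ((1/2) + 2 * sigma * pi0) * psi pistar w (pi1_1 sigma pi0)
  + ((1/2) - 2 * sigma * pi0) * psi pistar w (pi1_0 sigma pi0).
Definition PhiS (pistar w pi0 : R) : R := (1/2) + psi pistar w pi0.

Definition chooses_complex (pistar w sigma pi0 : R) : Prop :=
  PhiS pistar w pi0 <= PhiC pistar w sigma pi0.
Definition chooses_simple (pistar w sigma pi0 : R) : Prop :=
  PhiC pistar w sigma pi0 < PhiS pistar w pi0.

Definition pi_dagger (w sigma : R) : R := w / (4 * sigma * (1 + w)).
Definition pi_bar (pistar sigma : R) : R := pistar / (1 - 4 * sigma * (1 - pistar)).

(* Proof: below [pistar] the simple rule pays no wage, so the complex rule,
   which is correct more often, is chosen. From [pistar] on, a correct action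
   keeps the belief above [pistar], so the complex rule loses the wage only
   after an incorrect action, i.e. exactly when [pi0 < pi_bar]; it then trades
   an extra success probability [2 sigma pi0] against an expected wage loss
   [(1/2 - 2 sigma pi0) w], and this is a loss exactly when [pi0 < pi_dagger]. Hence the simple rule is
   chosen iff [pistar <= pi0 < min pi_dagger pi_bar], a condition that cannot
   hold when [pi_dagger <= pistar]. *)
From Stdlib Require Import Reals Lra Psatz.
From Coquelicot Require Import Rcomplements.
Open Scope R_scope.

Lemma pi1_1_ge (sigma pi0 : R) :
  0 <= sigma -> 0 <= pi0 <= 1 -> pi0 <= pi1_1 sigma pi0.
Proof.
  intros Hsigma Hpi0. unfold pi1_1.
  apply Rle_div_r; [nra |].
  assert (0 <= sigma * (pi0 * (1 - pi0))) by (apply Rmult_le_pos; nra).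
  nra.
Qed.

Lemma pi1_0_ge_iff (pistar sigma pi0 : R) :
  0 <= sigma <= 1 / 4 -> 0 <= pi0 < 1 -> 0 < pistar ->
  pistar <= pi1_0 sigma pi0 <-> pi_bar pistar sigma <= pi0.
Proof.
  intros Hsigma Hpi0 Hpistar. unfold pi1_0, pi_bar.
  rewrite <- Rle_div_r, Rle_div_l by nra.
  split; intro; nra.
Qed.

Lemma pi_dagger_le_iff (w sigma pi0 : R) :
  0 < sigma -> 0 < 1 + w ->
  pi_dagger w sigma <= pi0 <-> w <= 4 * sigma * pi0 * (1 + w).
Proof.
  intros Hsigma Hw. unfold pi_dagger.
  rewrite Rle_div_l by nra.
  split; intro; nra.
Qed.

Lemma psi_ge0 (pistar w p : R) : 0 <= w -> 0 <= psi pistar w p.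
Proof. intros Hw. unfold psi. destruct (Rle_dec pistar p); lra. Qed.

Lemma chooses_complex_iff_not_simple (pistar w sigma pi0 : R) :
  chooses_complex pistar w sigma pi0 <-> ~ chooses_simple pistar w sigma pi0.
Proof.
  unfold chooses_complex, chooses_simple.
  split; [apply Rle_not_lt | apply Rnot_lt_le].
Qed.

Section Payoffs.

Variables pistar w sigma pi0 : R.
Hypothesis Hsigma : 0 < sigma <= 1 / 4.
Hypothesis Hpi0 : 0 < pi0 < 1.
Hypothesis Hw : 0 < w.
Hypothesis Hpistar : 0 < pistar.

Lemma chooses_complex_below : pi0 < pistar -> chooses_complex pistar w sigma pi0.
Proof.
  intros Hbelow. unfold chooses_complex, PhiC, PhiS.
  assert (Hpsi0 : psi pistar w pi0 = 0).
  { unfold psi. destruct (Rle_dec pistar pi0); lra. }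
  pose proof (psi_ge0 pistar w (pi1_1 sigma pi0) (Rlt_le _ _ Hw)).
  pose proof (psi_ge0 pistar w (pi1_0 sigma pi0) (Rlt_le _ _ Hw)).
  assert (Hodds : 0 < 2 * sigma * pi0 <= 1 / 2) by nra.
  rewrite Hpsi0. nra.
Qed.

Lemma psi_pi1_1_above : pistar <= pi0 -> psi pistar w (pi1_1 sigma pi0) = w.
Proof.
  intros Habove. unfold psi.
  destruct (Rle_dec pistar (pi1_1 sigma pi0)) as [_ | Hlt]; [reflexivity |].
  exfalso. apply Hlt, Rle_trans with pi0; [exact Habove |].
  apply pi1_1_ge; lra.
Qed.

Lemma PhiC_above_pi_bar :
  pistar <= pi0 -> pi_bar pistar sigma <= pi0 ->
  PhiC pistar w sigma pi0 = PhiS pistar w pi0 + 2 * sigma * pi0.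
Proof.
  intros Habove Hbar. unfold PhiC, PhiS.
  rewrite psi_pi1_1_above by exact Habove.
  apply pi1_0_ge_iff in Hbar; [| lra | lra | lra].
  unfold psi. destruct (Rle_dec pistar pi0); destruct (Rle_dec pistar (pi1_0 sigma pi0)); lra.
Qed.

Lemma PhiC_below_pi_bar :
  pistar <= pi0 -> pi0 < pi_bar pistar sigma ->
  PhiC pistar w sigma pi0 = PhiS pistar w pi0 + 2 * sigma * pi0 - (1 / 2 - 2 * sigma * pi0) * w.
Proof.
  intros Habove Hbar.
  assert (Hpi1_0 : pi1_0 sigma pi0 < pistar).
  { apply Rnot_le_lt. rewrite pi1_0_ge_iff by lra. lra. }
  unfold PhiC, PhiS.
  rewrite psi_pi1_1_above by exact Habove.
  unfold psi. destruct (Rle_dec pistar pi0); destruct (Rle_dec pistar (pi1_0 sigma pi0)); lra.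
Qed.

Lemma chooses_simple_iff :
  chooses_simple pistar w sigma pi0 <->
  pistar <= pi0 /\ pi0 < pi_dagger w sigma /\ pi0 < pi_bar pistar sigma.
Proof.
  destruct (Rlt_or_le pi0 pistar) as [Hbelow | Habove].
  { pose proof (chooses_complex_below Hbelow) as Hcomplex.
    rewrite chooses_complex_iff_not_simple in Hcomplex.
    split; [contradiction | lra]. }
  unfold chooses_simple.
  destruct (Rlt_or_le pi0 (pi_bar pistar sigma)) as [Hbar | Hbar].
  - rewrite (PhiC_below_pi_bar Habove Hbar).
    pose proof (pi_dagger_le_iff w sigma pi0 (proj1 Hsigma) ltac:(lra)) as Hdagger.
    destruct (Rlt_or_le pi0 (pi_dagger w sigma)); split; intros; nra.
  - rewrite (PhiC_above_pi_bar Habove Hbar). nra.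
Qed.

End Payoffs.

Theorem proposition5 (sigma pi0 w pistar : R)
  (Hsigma : 0 < sigma <= 1 / 4) (Hpi0 : 0 < pi0 < 1) (Hw : 0 < w)
  (Hpistar : 0 < pistar < 1) :
  (pi_dagger w sigma <= pistar -> chooses_complex pistar w sigma pi0) /\
  (pistar < pi_dagger w sigma ->
     (chooses_simple pistar w sigma pi0 <->
      pistar <= pi0 /\ pi0 < Rmin (pi_dagger w sigma) (pi_bar pistar sigma))).
Proof.
  assert (Hsimple := chooses_simple_iff pistar w sigma pi0 Hsigma Hpi0 Hw (proj1 Hpistar)).
  split.
  - intros Hdagger. apply chooses_complex_iff_not_simple.
    rewrite Hsimple. lra.
  - intros _. rewrite Hsimple.
    change (pi0 < Rmin ?a ?b) with (Rmin a b > pi0). rewrite Rmin_Rgt. tauto.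
Qed.
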